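(* Let $X$ be a countably compact space satisfying $\mathsf{IC}$. Then $\mathsf{EC}(X,Y)$ holds for every C-closed isocompact space $Y$ with $G_\delta$ points.
   Context: All spaces are Hausdorff and maps continuous. $X$ satisfies $\mathsf{IC}$ if of any two disjoint closed subsets of $X$ at least one is Lindelöf. A space is C-closed if every countably compact subspace is closed, and isocompact if every closed countably compact subset is compact. For a non-Lindelöf space $X$, $\mathsf{EC}(X,Y)$ means: for every continuous $f:X\to Y$ there is a Lindelöf $Z\subset X$ with $f(X\setminus Z)$ a singleton (for Lindelöf $X$ regarded as trivially true). *)

From HB Require Import structures.
From mathcomp Require Import all_boot all_order all_algebra.
From mathcomp Require Import all_classical all_reals all_analysis.
Set Implicit Arguments. Unset Strict Implicit. Unset Printing Implicit Defensive.
Local Open Scope classical_set_scope.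

Definition lindelof_set {X : topologicalType} (A : set X) : Prop :=
  forall F : set (set X), F `<=` open -> A `<=` \bigcup_(U in F) U ->
    exists G : set (set X), [/\ G `<=` F, countable G & A `<=` \bigcup_(U in G) U].

Definition countably_compact_set {X : topologicalType} (A : set X) : Prop :=
  forall F : set (set X), countable F -> F `<=` open -> A `<=` \bigcup_(U in F) U ->
    exists G : set (set X), [/\ G `<=` F, finite_set G & A `<=` \bigcup_(U in G) U].

Definition IC (X : topologicalType) : Prop :=
  forall A B : set X, closed A -> closed B -> A `&` B = set0 ->
    lindelof_set A \/ lindelof_set B.

Definition C_closed (Y : topologicalType) : Prop :=
  forall A : set Y, countably_compact_set A -> closed A.

Definition isocompact (Y : topologicalType) : Prop :=
  forall A : set Y, closed A -> countably_compact_set A -> compact A.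

Definition Gdelta_points (Y : topologicalType) : Prop :=
  forall y : Y, exists U : nat -> set Y,
    (forall n, open (U n)) /\ [set y] = \bigcap_n U n.

(* EC(X,Y); trivially true for Lindelof X. *)
Definition EC (X Y : topologicalType) : Prop :=
  lindelof_set [set: X] \/
  forall f : X -> Y, continuous f ->
    exists Z : set X, lindelof_set Z /\ exists y : Y, f @` (~` Z) = [set y].

From HB Require Import structures.
From mathcomp Require Import all_boot all_order all_algebra.
From mathcomp Require Import all_classical all_reals all_analysis.
From mathcomp Require Import finmap.
Set Implicit Arguments. Unset Strict Implicit. Unset Printing Implicit Defensive.
Local Open Scope classical_set_scope.

(* The image K := f(X) is countably compact, hence closed and then compact in
   Y.  If every point of K had a neighbourhood W with f^-1(W) Lindelof,
   finitely many such W would cover K and X would be Lindelof; so some y in K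
   has no such neighbourhood.  For a closed C not containing y, separate y
   from the compact set K ∩ C by a W with closure W disjoint from K ∩ C:
   the closed sets f^-1(closure W) and f^-1(C) are disjoint and the first is
   not Lindelof, so IC makes f^-1(C) Lindelof.  Since {y} is a G_delta,
   Y \ {y} is a countable union of such C, so Z := f^-1(Y \ {y}) is Lindelof
   and f is constantly y off Z. *)

(* The library proves [compact_cover] only for pointed spaces. *)
Section pointed_at.
Variables (T : topologicalType) (t0 : T).

Definition pointed_at : Type := T.
HB.instance Definition _ := Topological.on pointed_at.
HB.instance Definition _ := isPointed.Build pointed_at t0.

Lemma compact_cover_at (A : set T) : compact A -> cover_compact A.
Proof.
by move=> cA; suff : @cover_compact pointed_at A by []; rewrite -compact_cover.
Qed.

End pointed_at.

Lemma compact_cover_compact (T : topologicalType) (A : set T) :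
  compact A -> cover_compact A.
Proof.
have [-> _ I D f _ _|/set0P[a _]] := eqVneq A set0; first by exists fset0.
exact: compact_cover_at.
Qed.

Lemma lindelof_bigcup (T : topologicalType) (I : Type) (D : set I)
    (B : I -> set T) :
  countable D -> (forall i, D i -> lindelof_set (B i)) ->
  lindelof_set (\bigcup_(i in D) B i).
Proof.
move=> cD lB F Fo cov.
have /choice[G HG] : forall i, exists G : set (set T),
    D i -> [/\ G `<=` F, countable G & B i `<=` \bigcup_(U in G) U].
  move=> i; have [Di|nDi] := pselect (D i); last by exists set0 => /nDi.
  have [G HG] := lB i Di F Fo (fun x Bx => cov x (ex_intro2 _ _ i Di Bx)).
  by exists G.
exists (\bigcup_(i in D) G i); split.
- by move=> U [i Di GiU]; have [+ _ _] := HG i Di; apply.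
- by apply: bigcup_countable => // i Di; have [_ + _] := HG i Di.
- move=> x [i Di Bx]; have [_ _ /(_ x Bx) [U GiU Ux]] := HG i Di.
  by exists U => //; exists i.
Qed.

Lemma countably_compact_image (X Y : topologicalType) (f : X -> Y)
    (A : set X) :
  continuous f -> countably_compact_set A -> countably_compact_set (f @` A).
Proof.
move=> cf ccA F cF Fo cov.
pose F' := preimage f @` F.
have F'o : F' `<=` open.
  by move=> _ [U FU <-]; apply: (proj1 (continuousP f) cf); exact: Fo.
have covA : A `<=` \bigcup_(V in F') V.
  move=> x Ax; have [U FU Ufx] := cov (f x) (ex_intro2 _ _ x Ax erefl).
  by exists (f @^-1` U) => //; exists U.
have cF' : countable F' by apply: sub_countable cF; exact: card_image_le.
have [G' [G'F' fG' covG']] := ccA F' cF' F'o covA.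
have /choice[g Hg] : forall V, exists U, F' V -> F U /\ f @^-1` U = V.
  move=> V; have [[U FU <-]|nF'V] := pselect (F' V); first by exists U.
  by exists set0 => /nF'V.
exists (g @` G'); split; [|exact: finite_image|].
- by move=> _ [V G'V <-]; have [] := Hg V (G'F' V G'V).
- move=> _ [x Ax <-]; have [V G'V Vx] := covG' x Ax.
  exists (g V); first by exists V.
  by have [_ gV] := Hg V (G'F' V G'V); rewrite -gV in Vx.
Qed.

Lemma countably_compact_compact (Y : topologicalType) (A : set Y) :
  C_closed Y -> isocompact Y -> countably_compact_set A -> compact A.
Proof. by move=> Ccl iso ccA; apply: iso => //; exact: Ccl. Qed.

Lemma compact_nbhs_closure_disjoint (T : topologicalType) (C : set T) (y : T) :
  hausdorff_space T -> compact C -> ~ C y ->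
  exists2 W, nbhs y W & closure W `&` C = set0.
Proof.
move=> hT cC nCy; apply: contrapT => noW.
pose F := filter_from (nbhs y) (fun W => closure W `&` C).
have PF : ProperFilter F.
  apply: filter_from_proper; last first.
    by move=> W yW; apply/set0P/negP => /eqP WC0; apply: noW; exists W.
  apply: filter_from_filter; first by exists setT; exact: filterT.
  move=> V W yV yW; exists (V `&` W); first exact: filterI.
  by move=> p [/closureI[Vp Wp] Cp].
have FC : F C by exists setT; [exact: filterT | move=> p []].
have [z [Cz clz]] := cC F PF FC.
suff zy : y = z by apply: nCy; rewrite zy.
apply: hT => A B yA zB.
have FAC : F (closure A `&` C) by exists A.
have [p [[clAp _] Bp]] := clz _ _ FAC (nbhs_interior zB).
by have [q [Aq Bq]] := clAp _ Bp; exists q.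
Qed.

Section preimages.
Variables (X Y : topologicalType) (f : X -> Y).

Lemma nonlindelof_preimage_point : compact (range f) ->
  ~ lindelof_set [set: X] ->
  exists2 y, range f y & forall W, nbhs y W -> ~ lindelof_set (f @^-1` W).
Proof.
move=> cK nLX; apply: contrapT => noy; apply: nLX.
have /choice[W HW] : forall y, exists W,
    range f y -> nbhs y W /\ lindelof_set (f @^-1` W).
  move=> y; have [Ky|nKy] := pselect (range f y); last by exists setT => /nKy.
  apply: contrapT => noW; apply: noy; exists y => // V yV LV.
  by apply: noW; exists V.
have covK : range f `<=` \bigcup_(y in range f) interior (W y).
  by move=> y Ky; exists y => //; exact: (proj1 (HW y Ky)).
have [D' sD' covK'] :=
  compact_cover_compact cK (fun y _ => @open_interior _ (W y)) covK.
have -> : [set: X] = \bigcup_(y in [set` D']) f @^-1` W y.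
  apply/seteqP; split => x // _.
  have [y D'y Wfx] := covK' (f x) (ex_intro2 _ _ x I erefl).
  by exists y => //; exact: interior_subset Wfx.
apply: lindelof_bigcup => [|y D'y]; first exact/finite_set_countable.
by have /sD' /[!in_setE] /HW[] := D'y.
Qed.

Lemma IC_preimage_lindelof (y : Y) (C : set Y) :
  IC X -> hausdorff_space Y -> continuous f -> compact (range f) ->
  (forall W, nbhs y W -> ~ lindelof_set (f @^-1` W)) ->
  closed C -> ~ C y -> lindelof_set (f @^-1` C).
Proof.
move=> icX hY cf cK ybad clC nCy.
have cpre : forall A, closed A -> closed (f @^-1` A).
  exact: (proj1 (continuous_closedP f) cf).
have [W yW WKC0] := compact_nbhs_closure_disjoint hY (compact_closedI cK clC)
  (fun KCy => nCy KCy.2).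
have disj : f @^-1` closure W `&` f @^-1` C = set0.
  apply/seteqP; split => x // [clWfx Cfx].
  suff : (closure W `&` (range f `&` C)) (f x) by rewrite WKC0.
  by split => //; split => //; exists x.
case: (icX _ _ (cpre _ (@closed_closure _ W)) (cpre _ clC) disj) => // LW.
by case: (ybad (closure W)) => //; apply: filterS yW; exact: subset_closure.
Qed.

End preimages.

Theorem corollary3p10 (X : topologicalType) :
  hausdorff_space X -> countably_compact_set [set: X] -> IC X ->
  forall Y : topologicalType, hausdorff_space Y ->
    C_closed Y -> isocompact Y -> Gdelta_points Y -> EC X Y.
Proof.
move=> _ ccX icX Y hY Ccl iso gd.
have [LX|nLX] := pselect (lindelof_set [set: X]); [by left | right => f cf].
have cK : compact (range f).
  exact/(countably_compact_compact Ccl iso)/countably_compact_image.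
have [y Ky ybad] := nonlindelof_preimage_point cK nLX.
have [U [Uo eU]] := gd y.
have Uy n : U n y by have : [set y] y by []; rewrite eU; apply.
exists (f @^-1` ~` [set y]); split.
  rewrite eU setC_bigcap preimage_bigcup.
  apply: lindelof_bigcup => [|n _]; first exact: countableP.
  by apply: (IC_preimage_lindelof (y := y)) => //; [exact: open_closedC|apply].
exists y; apply/seteqP; split => [_ [x /contrapT fxy <-] //|_ ->].
by case: Ky => x _ fxy; exists x; rewrite /= fxy.
Qed.
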